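(* Let $\mathcal{H}$ be a Hilbert space of finite dimension $d\geq 2$ with orthonormal basis $\{\phi_k\}_{k=1}^d$. Define the instrument $\mathcal{I}$ on $\Omega=\{0,1\}$ by $\mathcal{I}_\omega(T)=L_\omega^* T L_\omega$, where $L_0=|\phi_d\rangle\langle\phi_d|$ and $L_1=\sum_{k=1}^{d-1}|\phi_{k+1}\rangle\langle\phi_k|$. Then: (a) If $1\leq n\leq d-1$, then $\mathsf{A}^\mathcal{I}_n\simeq\mathsf{P}_n$, where $\mathsf{P}_n$ is the sharp observable on $\{1,\ldots,n+1\}$ given by $\mathsf{P}_n(1)=\sum_{l=1}^{d-n}|\phi_l\rangle\langle\phi_l|$ and $\mathsf{P}_n(j)=|\phi_{d-n+j-1}\rangle\langle\phi_{d-n+j-1}|$ for $2\leq j\leq n+1$. (b) If $n\geq d-1$, then $\mathsf{A}^\mathcal{I}_n\simeq\mathsf{P}_{d-1}$, where $\mathsf{P}_{d-1}(j)=|\phi_j\rangle\langle\phi_j|$ for $1\leq j\leq d$.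
   Context: An observable with finite outcome set is a map $\omega\mapsto\mathsf{A}(\omega)$ into positive operators summing to $\mathbb{1}$; it is sharp if each $\mathsf{A}(\omega)$ is a projection. For finite-outcome observables, $\mathsf{A}\preceq\mathsf{B}$ means there is $\kappa:\Omega_\mathsf{A}\times\Omega_\mathsf{B}\to[0,1]$ with $\sum_\omega\kappa(\omega|\omega')=1$ for all $\omega'$ and $\mathsf{A}(\omega)=\sum_{\omega'}\kappa(\omega|\omega')\mathsf{B}(\omega')$; $\mathsf{A}\simeq\mathsf{B}$ means both $\mathsf{A}\preceq\mathsf{B}$ and $\mathsf{B}\preceq\mathsf{A}$. For an instrument $\mathcal{I}$, $\mathsf{A}^\mathcal{I}_n$ is the observable on $\Omega^n$ with $\mathsf{A}^\mathcal{I}_n(\omega_1,\ldots,\omega_n)=\mathcal{I}_{\omega_1}\circ\cdots\circ\mathcal{I}_{\omega_n}(\mathbb{1})$. *)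

(* operators on a d-dimensional complex Hilbert space are
   d x d matrices over algC (algebraic complex numbers, with conjugation). *)
From mathcomp Require Import all_boot all_order all_algebra all_field.
Set Implicit Arguments. Unset Strict Implicit. Unset Printing Implicit Defensive.
Import Order.TTheory GRing.Theory Num.Theory.
Local Open Scope ring_scope.

Definition adj (m n : nat) (A : 'M[algC]_(m, n)) : 'M[algC]_(n, m) :=
  \matrix_(i, j) (A j i)^*.

Definition ketbra (d : nat) (u v : 'cV[algC]_d) : 'M[algC]_d := u *m adj v.

Definition orthonormal_basis (d : nat) (U : 'M[algC]_d) : Prop :=
  forall i j : 'I_d, \sum_(k < d) (U k i)^* * U k j = (i == j)%:R.

(* phi_k (0-indexed: k : 'I_d corresponds to phi_{k+1} of the paper) *)
Definition phi (d : nat) (U : 'M[algC]_d) (k : 'I_d) : 'cV[algC]_d := col k U.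

Definition postproc (d : nat) (OA OB : finType)
    (A : OA -> 'M[algC]_d) (B : OB -> 'M[algC]_d) : Prop :=
  exists kappa : OA -> OB -> algC,
    [/\ forall a b, 0 <= kappa a b <= 1,
        forall b, \sum_a kappa a b = 1 &
        forall a, A a = \sum_b kappa a b *: B b].

Definition obs_equiv (d : nat) (OA OB : finType)
    (A : OA -> 'M[algC]_d) (B : OB -> 'M[algC]_d) : Prop :=
  postproc A B /\ postproc B A.

(* Kraus operators: outcome false = 0, true = 1 (paper's 1-indexed phi_k
   is our 0-indexed phi U (k-1)). *)
Definition L0 (d : nat) (U : 'M[algC]_d) : 'M[algC]_d :=
  \sum_(k < d | k.+1 == d) ketbra (phi U k) (phi U k).

Definition L1 (d : nat) (U : 'M[algC]_d) : 'M[algC]_d :=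
  \sum_(k < d) \sum_(l < d | val l == k.+1) ketbra (phi U l) (phi U k).

Definition Lop (d : nat) (U : 'M[algC]_d) (w : bool) : 'M[algC]_d :=
  if w then L1 U else L0 U.

Definition instr (d : nat) (U : 'M[algC]_d) (w : bool) (T : 'M[algC]_d)
  : 'M[algC]_d := adj (Lop U w) *m T *m Lop U w.

Definition An (d : nat) (U : 'M[algC]_d) (n : nat) (w : n.-tuple bool)
  : 'M[algC]_d := foldr (instr U) 1%:M (tval w).

(* P_n on outcomes {1,...,n+1}, represented by j : 'I_n.+1 (j = paper's j - 1):
   P_n(1) = sum_{l=1}^{d-n} |phi_l><phi_l|,
   P_n(j) = |phi_{d-n+j-1}><phi_{d-n+j-1}| for 2 <= j <= n+1. *)
Definition Pn (d : nat) (U : 'M[algC]_d) (n : nat) (j : 'I_n.+1) : 'M[algC]_d :=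
  if val j == 0%N then \sum_(l < d | (l < d - n)%N) ketbra (phi U l) (phi U l)
  else \sum_(l < d | val l == (d - n + j - 1)%N) ketbra (phi U l) (phi U l).
Arguments An d U n w : clear implicits.
Arguments Pn d U n j : clear implicits.

(* In the basis phi, each Kraus operator maps a basis vector to a basis vector or to 0:
   L_1 shifts phi_k to phi_(k+1) and kills phi_d, while L_0 fixes phi_d and kills the rest.
   Hence every effect of A_n is diagonal in the basis, namely the sum of the projections
   onto those phi_k whose deterministic outcome record over n steps is the given word.
   Starting from phi_k, one reads 1 until phi_d is reached and 0 afterwards, so the record
   only depends on max(k + n - d, 0).  Two relabelings of the same sharp observable are
   post-processing equivalent as soon as they induce the same partition of the basis,
   and the partition defined by P_min(n, d-1) is exactly this one. *)
From mathcomp Require Import all_boot all_order all_algebra all_field.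
From mathcomp Require Import zify.
Import Order.TTheory GRing.Theory Num.Theory.
Set Implicit Arguments. Unset Strict Implicit. Unset Printing Implicit Defensive.
Local Open Scope ring_scope.

Section Adjoint.
Local Open Scope sesquilinear_scope.

Lemma adjE (m n : nat) (A : 'M[algC]_(m, n)) : adj A = A ^t*.
Proof. by apply/matrixP => i j; rewrite !mxE. Qed.

Lemma adjM (m n p : nat) (A : 'M[algC]_(m, n)) (B : 'M[algC]_(n, p)) :
  adj (A *m B) = adj B *m adj A.
Proof. by rewrite !adjE trmx_mul map_mxM. Qed.

Lemma adjK (m n : nat) (A : 'M[algC]_(m, n)) : adj (adj A) = A.
Proof. by rewrite !adjE trmxCK. Qed.

Lemma adj_sum (m n : nat) (I : Type) (r : seq I) (P : pred I)
    (F : I -> 'M[algC]_(m, n)) :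
  adj (\sum_(i <- r | P i) F i) = \sum_(i <- r | P i) adj (F i).
Proof.
rewrite adjE; under [RHS]eq_bigr do rewrite adjE.
by rewrite raddf_sum /= raddf_sum.
Qed.

End Adjoint.

Section Relabeling.
Variables (d : nat) (K : finType) (E : K -> 'M[algC]_d).

Definition relabel (O : finType) (f : K -> O) (o : O) : 'M[algC]_d :=
  \sum_(k | f k == o) E k.

Lemma postproc_relabel (OA OB : finType) (A : OA -> 'M[algC]_d)
    (B : OB -> 'M[algC]_d) (f : K -> OA) (g : K -> OB) (h : OB -> OA) :
  A =1 relabel f -> B =1 relabel g -> f =1 h \o g -> postproc A B.
Proof.
move=> defA defB fE; exists (fun a b => (h b == a)%:R); split.
- by move=> a b; case: (h b == a); rewrite /= ?lexx ?ler01.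
- move=> b; rewrite (bigD1 (h b)) //= eqxx big1 ?addr0 // => a.
  by rewrite eq_sym => /negbTE ->.
move=> a; rewrite defA /relabel (partition_big g xpredT) //=.
apply: eq_bigr => b _; rewrite defB.
have [<-|hb_neq] := eqVneq (h b) a.
  rewrite scale1r; apply: eq_bigl => k.
  by have [<-|_] := eqVneq (g k) b; rewrite ?fE ?eqxx ?andbF.
rewrite scale0r big_pred0 // => k.
by have [gk|_] := eqVneq (g k) b; rewrite ?andbF // fE /= gk (negbTE hb_neq).
Qed.

Lemma obs_equiv_relabel (OA OB : finType) (A : OA -> 'M[algC]_d)
    (B : OB -> 'M[algC]_d) (f : K -> OA) (g : K -> OB) (k0 : K) :
  A =1 relabel f -> B =1 relabel g ->
  (forall k k', (f k == f k') = (g k == g k')) -> obs_equiv A B.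
Proof.
move=> defA defB fg; split.
- apply: (postproc_relabel (h := fun b =>
    if [pick k | g k == b] is Some k then f k else f k0)) => // k /=.
  by case: pickP => [k' /eqP gk'|/(_ k)]; [apply/eqP; rewrite fg gk' | rewrite eqxx].
- apply: (postproc_relabel (h := fun a =>
    if [pick k | f k == a] is Some k then g k else g k0)) => // k /=.
  by case: pickP => [k' /eqP fk'|/(_ k)]; [apply/eqP; rewrite -fg fk' | rewrite eqxx].
Qed.

End Relabeling.

Section Basis.
Variables (d : nat) (U : 'M[algC]_d).
Hypothesis hU : orthonormal_basis U.

Definition mxunit (i j : 'I_d) : 'M[algC]_d := ketbra (phi U i) (phi U j).

Lemma adj_phi_mul_phi i j : adj (phi U i) *m phi U j = (i == j)%:R%:M.
Proof.
apply/matrixP => a b; rewrite !ord1 !mxE.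
by under eq_bigr do rewrite !mxE; rewrite hU mulr1n.
Qed.

Lemma mxunitM i j k l : mxunit i j *m mxunit k l = (j == k)%:R *: mxunit i l.
Proof.
rewrite /mxunit /ketbra -mulmxA (mulmxA (adj _)) adj_phi_mul_phi.
by rewrite mul_scalar_mx scalemxAr.
Qed.

Lemma adj_mxunit i j : adj (mxunit i j) = mxunit j i.
Proof. by rewrite /mxunit /ketbra adjM adjK. Qed.

Lemma sum_mxunit_diag : \sum_k mxunit k k = 1%:M.
Proof.
have adjUU : adj U *m U = 1%:M.
  by apply/matrixP => a b; rewrite !mxE; under eq_bigr do rewrite mxE; rewrite hU.
rewrite -(mulmx1C adjUU); apply/matrixP => a b; rewrite summxE !mxE.
by apply: eq_bigr => k _; rewrite !mxE big_ord1 !mxE.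
Qed.

End Basis.

Section ShiftInstrument.
Variables (d' : nat) (U : 'M[algC]_d'.+1).
Hypothesis hU : orthonormal_basis U.

Definition kraus_out (j : 'I_d'.+1) : bool := (j < d')%N.

Definition kraus_next (j : 'I_d'.+1) : 'I_d'.+1 := inord (minn j.+1 d').

Lemma kraus_nextE j : kraus_next j = minn j.+1 d' :> nat.
Proof. by rewrite inordK // ltnS geq_minr. Qed.

Lemma kraus_next_inj j j' :
  kraus_out j = kraus_out j' -> kraus_next j = kraus_next j' -> j = j'.
Proof.
rewrite /kraus_out => out_eq /(congr1 val); rewrite /= !kraus_nextE => next_eq.
apply: val_inj; have := ltn_ord j; have := ltn_ord j'.
by move: out_eq next_eq; case: ltnP; case: ltnP => //= *; lia.
Qed.

Lemma LopE w : Lop U w = \sum_(j | kraus_out j == w) mxunit U (kraus_next j) j.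
Proof.
case: w => /=.
- rewrite /L1 [RHS]big_mkcond /=; apply: eq_bigr => k _.
  have ltk := ltn_ord k; rewrite /kraus_out.
  case: ltnP => hk.
    rewrite (eq_bigl (pred1 (kraus_next k))) ?big_pred1_eq // => l.
    by apply/eqP/eqP => [h|->]; [apply: val_inj|]; rewrite /= kraus_nextE; lia.
  by rewrite big_pred0 // => l; apply/eqP; have := ltn_ord l; lia.
- rewrite /L0; apply: eq_big => k.
    by have := ltn_ord k; rewrite /kraus_out eqSS; case: ltnP; case: eqP => //=; lia.
  move=> /eqP kd; congr (mxunit U _ k); apply: val_inj.
  by rewrite /= kraus_nextE; lia.
Qed.

Lemma instr_sum w (I : Type) (r : seq I) (P : pred I) (F : I -> 'M[algC]_d'.+1) :
  instr U w (\sum_(i <- r | P i) F i) = \sum_(i <- r | P i) instr U w (F i).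
Proof. by rewrite /instr mulmx_sumr mulmx_suml. Qed.

Lemma instr_mxunit w k :
  instr U w (mxunit U k k) =
  \sum_(j | (kraus_out j == w) && (kraus_next j == k)) mxunit U j j.
Proof.
rewrite /instr LopE adj_sum; under eq_bigr do rewrite adj_mxunit.
rewrite !mulmx_suml big_mkcondr /=; apply: eq_bigr => j out_j.
rewrite mulmx_sumr.
under eq_bigr do rewrite (mxunitM hU) -scalemxAl (mxunitM hU) scalerA.
have [<-|next_neq] := eqVneq (kraus_next j) k; last first.
  by rewrite big1 // => j' _; rewrite mul0r scale0r.
rewrite (bigD1 j) //= eqxx mul1r scale1r big1 ?addr0 // => j' /andP[out_j' neq].
have [next_eq|] := eqVneq (kraus_next j) (kraus_next j'); last by rewrite mulr0 scale0r.
by move: neq; rewrite (kraus_next_inj _ next_eq) ?eqxx // (eqP out_j) (eqP out_j').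
Qed.

Fixpoint outcome_record (n : nat) (j : 'I_d'.+1) : seq bool :=
  if n is n'.+1 then kraus_out j :: outcome_record n' (kraus_next j) else [::].

Lemma size_outcome_record n j : size (outcome_record n j) == n.
Proof. by elim: n j => [|n IH] j //=; rewrite eqSS IH. Qed.

Definition outcome_tuple n j : n.-tuple bool := Tuple (size_outcome_record n j).

Lemma foldr_instr s :
  foldr (instr U) 1%:M s = \sum_(j | outcome_record (size s) j == s) mxunit U j j.
Proof.
elim: s => [|w s IH] /=; first by rewrite (sum_mxunit_diag hU).
rewrite IH instr_sum (eq_bigr _ (fun j _ => instr_mxunit w j)).
rewrite [RHS](partition_big kraus_next
  (fun k => outcome_record (size s) k == s)) => [|j]; last by case/andP.
apply: eq_bigr => k rec_k; apply: eq_bigl => j /=.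
by rewrite eqseq_cons eq_sym; have [->|_] := eqVneq (kraus_next j) k;
  rewrite ?rec_k ?andbT ?andbF.
Qed.

Lemma An_relabel n : An d'.+1 U n =1 relabel (fun j => mxunit U j j) (outcome_tuple n).
Proof. by move=> w; rewrite /An foldr_instr size_tuple. Qed.

Lemma eq_outcome_record n l l' :
  (outcome_record n l == outcome_record n l') = ((l + n - d')%N == (l' + n - d')%N).
Proof.
elim: n l l' => [|n IH] l l' /=.
  by have := ltn_ord l; have := ltn_ord l'; rewrite eqxx => *; apply/esym/eqP; lia.
rewrite eqseq_cons IH !kraus_nextE /kraus_out.
have := ltn_ord l; have := ltn_ord l'.
case: (ltnP l d'); case: (ltnP l' d') => /= *.
all: first [by apply/esym/eqP; lia | by apply/eqP/eqP; lia].
Qed.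

Definition Pn_label m (l : 'I_d'.+1) : 'I_m.+1 := inord (l + m - d').

Lemma Pn_labelE m l : (m <= d')%N -> Pn_label m l = (l + m - d')%N :> nat.
Proof. by move=> le_md; rewrite inordK //; have := ltn_ord l; lia. Qed.

Lemma Pn_relabel m : (m <= d')%N ->
  Pn d'.+1 U m =1 relabel (fun j => mxunit U j j) (Pn_label m).
Proof.
move=> le_md [j0 lt_j0]; rewrite /Pn /relabel /=.
case: eqP => j0_eq0; apply: eq_bigl => l; have := ltn_ord l.
all: rewrite -val_eqE /= Pn_labelE //.
- by case: ltnP; case: eqP => /= *; lia.
- by case: eqP; case: eqP => /= *; lia.
Qed.

Lemma An_equiv_Pn n m : (m <= d')%N ->
  (forall l l' : 'I_d'.+1, ((l + n - d')%N == (l' + n - d')%N) =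
                           ((l + m - d')%N == (l' + m - d')%N)) ->
  obs_equiv (An d'.+1 U n) (Pn d'.+1 U m).
Proof.
move=> le_md same_partition.
apply: (obs_equiv_relabel ord0 (@An_relabel n) (Pn_relabel le_md)) => l l'.
by rewrite -val_eqE /= eq_outcome_record same_partition -val_eqE /= !Pn_labelE.
Qed.

End ShiftInstrument.

Theorem proposition3 (d : nat) (hd : (2 <= d)%N) (U : 'M[algC]_d)
    (hU : orthonormal_basis U) :
  (forall n : nat, (1 <= n <= d - 1)%N -> obs_equiv (An d U n) (Pn d U n)) /\
  (forall n : nat, (d - 1 <= n)%N -> obs_equiv (An d U n) (Pn d U (d - 1))).
Proof.
case: d hd U hU => [//|d'] _ U hU; rewrite subn1 /=.
split => n n_range; first by apply: (An_equiv_Pn hU) => //; lia.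
apply: (An_equiv_Pn hU) => // l l'.
by rewrite !addnK -!addnBA // eqn_add2r.
Qed.
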